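(* For $n\ge1$ let $T_n$ be the program defined below. The class $\{T_n: n\ge 1\}$ is isomorphically complete with respect to the cascade program product: for every program $P$ there exists a cascade program product $\mathbf P$ all of whose factors are programs from $\{T_n:n\ge1\}$ such that $\Psi_P\in\mathbf I\mathbf S(\{\Psi_{\mathbf P}\})$, i.e. the characteristic automaton of $P$ is isomorphic to a subautomaton of the characteristic automaton of $\mathbf P$.
   Context: Notation: $[n]=\{1,\dots,n\}$. Programs: a (normal logic) program $P$ over a finite nonempty set of atoms $\Gamma_P$ is a finite nonempty set of rules $a\leftarrow b_1,\dots,b_k,\mathrm{not}\,b_{k+1},\dots,\mathrm{not}\,b_m$ ($m\ge k\ge 0$, atoms in $\Gamma_P$); for such a rule $r$, $H(r)=a$, $B^+(r)=\{b_1,\dots,b_k\}$, $B^-(r)=\{b_{k+1},\dots,b_m\}$. $\mathcal I_P$ is the power set of $\Gamma_P$. $\Psi_P:\mathcal I_P\times\mathcal I_P\to\mathcal I_P$ is $\Psi_P(I,J)=\{H(r): r\in P,\ B^+(r)\subseteq I,\ B^-(r)\cap J=\emptyset\}$. The characteristic automaton of $P$ is $\langle \mathcal I_P,\mathcal I_P,\Psi_P\rangle$, also denoted $\Psi_P$. The programs $T_n$: for $n\ge1$ let $\sigma_1,\dots,\sigma_{n^n}$ enumerate all mappings $[n]\to[n]$. $T_n$ is the program over $[n^n]$ consisting of the rules $\sigma_k(j)\leftarrow j,\ \mathrm{not}\,k$ for all $j\in[n]$ and $k\in[n^n]$. Automata: an automaton $\langle Q,\Sigma,\delta\rangle$ has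 finite state set $Q$, finite nonempty input alphabet $\Sigma$, and $\delta:Q\times\Sigma\to Q$. $\langle Q',\Sigma',\delta'\rangle$ is a subautomaton of $\langle Q,\Sigma,\delta\rangle$ if $Q'\subseteq Q$, $\Sigma'\subseteq\Sigma$, $\delta(Q'\times\Sigma')\subseteq Q'$ and $\delta'=\delta|_{Q'\times\Sigma'}$. An isomorphism onto $\langle Q',\Sigma',\delta'\rangle$ is a pair of bijections $h_1:Q\to Q'$, $h_2:\Sigma\to\Sigma'$ with $h_1(\delta(q,x))=\delta'(h_1(q),h_2(x))$ for all $q,x$. $\mathbf S(\mathcal A)$, $\mathbf I(\mathcal A)$ denote the classes of subautomata and isomorphic images of automata in $\mathcal A$. Cascade program product: let $P_1,\dots,P_k$ ($k\ge1$) be programs and $\mathcal I_{\mathbf P}$ a finite nonempty set. A feedforward function is $\psi_{\mathbf P}=(\psi_{\mathbf P,1},\dots,\psi_{\mathbf P,k})$ with $\psi_{\mathbf P,i}:(\mathcal I_{P_1}\times\dots\times\mathcal I_{P_k})\times\mathcal I_{\mathbf P}\to\mathcal I_{P_i}$ not depending on its $j$-th component for any $j\ge i$. The product $\mathbf P=P_1\ltimes\dots\ltimes P_k[\mathcal I_{\mathbf P},\psi_{\mathbf P}]$ has characteristic automaton $\Psi_{\mathbf P}=\langle \mathcal I_{P_1}\times\dots\times\mathcal I_{P_k},\ \mathcal I_{\mathbf P},\ \Psi_{\mathbf P}\rangle$ with $\Psi_{\mathbf P}((I_1,\dots,I_k),\mathbf J)=\big(\Psi_{P_1}(I_1,\psi_{\mathbf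 P,1}(\mathbf J)),\dots,\Psi_{P_k}(I_k,\psi_{\mathbf P,k}((I_1,\dots,I_{k-1}),\mathbf J))\big)$. The product isomorphically represents $P$ if $\Psi_P\in\mathbf I\mathbf S(\{\Psi_{\mathbf P}\})$. *)

From HB Require Import structures.
From mathcomp Require Import all_boot.
Set Implicit Arguments. Unset Strict Implicit. Unset Printing Implicit Defensive.

Definition is_subautomaton (Q S : finType) (delta : Q -> S -> Q)
  (Q' : {set Q}) (S' : {set S}) : Prop :=
  forall q x, q \in Q' -> x \in S' -> delta q x \in Q'.

Definition bij_onto (A B : finType) (h : A -> B) (B' : {set B}) : Prop :=
  injective h /\ (forall a, h a \in B') /\
  (forall b, b \in B' -> exists a, h a = b).

Definition iso_onto (Q1 S1 Q2 S2 : finType) (d1 : Q1 -> S1 -> Q1)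
  (d2 : Q2 -> S2 -> Q2) (Q' : {set Q2}) (S' : {set S2})
  (h1 : Q1 -> Q2) (h2 : S1 -> S2) : Prop :=
  bij_onto h1 Q' /\ bij_onto h2 S' /\
  (forall q x, h1 (d1 q x) = d2 (h1 q) (h2 x)).

Definition in_IS (Q1 S1 Q2 S2 : finType) (d1 : Q1 -> S1 -> Q1)
  (d2 : Q2 -> S2 -> Q2) : Prop :=
  exists (Q' : {set Q2}) (S' : {set S2}) (h1 : Q1 -> Q2) (h2 : S1 -> S2),
    is_subautomaton d2 Q' S' /\ iso_onto d1 d2 Q' S' h1 h2.

(** A rule  a <- b_1,...,b_k, not b_{k+1},...,not b_m  over the atoms [A]:
    only H(r), B^+(r), B^-(r) matter. *)
Record rule (A : finType) := Rule {
  head : A;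
  bpos : {set A};
  bneg : {set A} }.

Record program := Program {
  atoms : finType;
  rules : seq (rule atoms) }.

Definition valid_program (P : program) : Prop :=
  0 < #|atoms P| /\ 0 < size (rules P).

Definition Psi (P : program) (I J : {set atoms P}) : {set atoms P} :=
  [set a | has (fun r => (head r == a) && (bpos r \subset I)
                          && [disjoint bneg r & J]) (rules P)].

(** * The programs T_n  (0-based: [n] is 'I_n, [n^n] is 'I_(n^n)) *)

Lemma T_le_expnn (n : nat) (j : 'I_n) : n <= n ^ n.
Proof.
have n0 : 0 < n by case: j => [m Hm]; apply: leq_ltn_trans Hm.
by rewrite -{1}(expn1 n) leq_pexp2l.
Qed.

Definition T_atom (n : nat) (j : 'I_n) : 'I_(n ^ n) := widen_ord (T_le_expnn j) j.

Lemma card_maps (n : nat) : #|{ffun 'I_n -> 'I_n}| = n ^ n.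
Proof. by rewrite card_ffun card_ord. Qed.

Definition T_sigma (n : nat) (k : 'I_(n ^ n)) : {ffun 'I_n -> 'I_n} :=
  enum_val (cast_ord (esym (card_maps n)) k).

(** T_n: rules  sigma_k(j) <- j, not k  for j in [n], k in [n^n]. *)
Definition T (n : nat) : program :=
  @Program (ordinal (n ^ n))
    (flatten [seq [seq Rule (T_atom (T_sigma k j)) [set T_atom j] [set k]
                  | j <- enum 'I_n] | k <- enum 'I_(n ^ n)]).

Definition cstate (k : nat) (F : 'I_k -> program) :=
  {dffun forall i : 'I_k, {set atoms (F i)}}.

Definition feedforward (k : nat) (F : 'I_k -> program) (X : finType)
  (psi : forall i : 'I_k, cstate F -> X -> {set atoms (F i)}) : Prop :=
  forall (i : 'I_k) (s s' : cstate F) (x : X),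
    (forall j : 'I_k, j < i -> s j = s' j) -> psi i s x = psi i s' x.

Definition Psi_cascade (k : nat) (F : 'I_k -> program) (X : finType)
  (psi : forall i : 'I_k, cstate F -> X -> {set atoms (F i)})
  (s : cstate F) (x : X) : cstate F :=
  [ffun i => Psi (s i) (psi i s x)].

From HB Require Import structures.
From mathcomp Require Import all_boot.

(* Number the states of an automaton <Q, S, delta> by [n] with n = #|Q|.  The
   state q is coded by the state {q} of T_n, and the input x by the input
   [n^n] \ {k}, where sigma_k is the map j |-> delta(j, x) on these numbers:
   the only rule of T_n that can fire is then sigma_k(q) <- q, not k, so T_n
   moves from {q} to {delta(q, x)}.  A one-factor cascade of T_n with this
   input coding therefore contains an isomorphic copy of every automaton with
   n states, in particular of the characteristic automaton of any program. *)

Lemma has_flatten (T : Type) (a : pred T) (ss : seq (seq T)) :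
  has a (flatten ss) = has (has a) ss.
Proof. by elim: ss => //= s ss IH; rewrite has_cat IH. Qed.

Lemma bij_onto_imset (A B : finType) (h : A -> B) :
  injective h -> bij_onto h (h @: setT).
Proof.
move=> h_inj; split=> //; split=> [a | _ /imsetP [a _ ->]]; last by exists a.
exact: imset_f.
Qed.

Lemma in_IS_inj_morph (Q1 S1 Q2 S2 : finType) (d1 : Q1 -> S1 -> Q1)
    (d2 : Q2 -> S2 -> Q2) (h1 : Q1 -> Q2) (h2 : S1 -> S2) :
    injective h1 -> injective h2 ->
    (forall q x, h1 (d1 q x) = d2 (h1 q) (h2 x)) ->
  in_IS d1 d2.
Proof.
move=> h1_inj h2_inj h_morph.
exists (h1 @: setT), (h2 @: setT), h1, h2.
split.
  move=> _ _ /imsetP [q _ ->] /imsetP [x _ ->]; rewrite -h_morph.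
  exact: imset_f.
by split; [|split]; [exact: bij_onto_imset | exact: bij_onto_imset |].
Qed.

Lemma T_atom_inj (n : nat) : injective (@T_atom n).
Proof. by move=> a b /(congr1 val) /= eq_ab; apply: val_inj. Qed.

Definition T_index {n : nat} (f : {ffun 'I_n -> 'I_n}) : 'I_(n ^ n) :=
  cast_ord (card_maps n) (enum_rank f).

Lemma T_sigma_index (n : nat) (f : {ffun 'I_n -> 'I_n}) :
  T_sigma (T_index f) = f.
Proof. by rewrite /T_sigma cast_ordK enum_rankK. Qed.

Lemma Psi_T_singleton (n : nat) (j : 'I_n) (k : 'I_(n ^ n)) :
  @Psi (T n) [set T_atom j] (~: [set k]) = [set T_atom (T_sigma k j)].
Proof.
apply/setP => a; rewrite !inE /= has_flatten has_map.
apply/hasP/eqP.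
- case=> k' _ /=; rewrite has_map => /hasP [j' _] /=.
  move=> /andP [/andP [/eqP <- j_j'] k_k'].
  move: j_j'; rewrite sub1set inE => /eqP /T_atom_inj ->.
  by move: k_k'; rewrite disjoints1 !inE negbK => /eqP ->.
- move=> ->; exists k; first by rewrite mem_enum.
  rewrite /preim /= has_map; apply/hasP; exists j; first by rewrite mem_enum.
  by rewrite /= eqxx subxx disjoints1 !inE negbK eqxx.
Qed.

Section SimulationByT.

Variables (Q S : finType) (delta : Q -> S -> Q).

Definition T_state (q : Q) : {set 'I_(#|Q| ^ #|Q|)} := [set T_atom (enum_rank q)].

Definition T_input (x : S) : {set 'I_(#|Q| ^ #|Q|)} :=
  ~: [set T_index [ffun j => enum_rank (delta (enum_val j) x)]].

Lemma Psi_T_simulates (q : Q) (x : S) :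
  @Psi (T #|Q|) (T_state q) (T_input x) = T_state (delta q x).
Proof. by rewrite Psi_T_singleton T_sigma_index ffunE enum_rankK. Qed.

Definition T_cascade_input (i : 'I_1) (s : cstate (fun _ : 'I_1 => T #|Q|))
    (x : S) : {set atoms (T #|Q|)} :=
  T_input x.

Lemma T_cascade_input_feedforward : feedforward T_cascade_input.
Proof. by []. Qed.

Lemma in_IS_T_cascade : in_IS delta (Psi_cascade T_cascade_input).
Proof.
pose h (q : Q) : cstate (fun _ : 'I_1 => T #|Q|) := [ffun _ => T_state q].
apply: (@in_IS_inj_morph _ _ _ _ _ _ h id) => //.
- move=> q q' /ffunP /(_ ord0); rewrite !ffunE => /set1_inj /T_atom_inj.
  exact: enum_rank_inj.
- by move=> q x; apply/ffunP => i; rewrite !ffunE Psi_T_simulates.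
Qed.

End SimulationByT.

Theorem theorem5p1 :
  forall P : program, valid_program P ->
  exists (k : nat) (ns : 'I_k -> nat) (X : finType)
         (psi : forall i : 'I_k,
                  cstate (fun i => T (ns i)) -> X -> {set atoms (T (ns i))}),
    0 < k /\ (forall i, 0 < ns i) /\ 0 < #|X| /\
    feedforward psi /\
    in_IS (@Psi P) (Psi_cascade psi).
Proof.
move=> P _.
have interp_gt0 : 0 < #|{set atoms P}| by apply/card_gt0P; exists set0.
exists 1, (fun _ => #|{set atoms P}|), {set atoms P},
  (@T_cascade_input _ _ (@Psi P)).
do 3 split => //.
split; [exact: T_cascade_input_feedforward | exact: in_IS_T_cascade].
Qed.
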